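(* Let $A=\{0,1\}+3\mathbb{Z}=\{n\in\mathbb{Z}: n\equiv 0 \text{ or } 1 \pmod 3\}$. Then $h(A^2)=8$.
   Context: For a set $X\subseteq\mathbb{R}^d$, the Helly number $h(X)$ is the smallest $h$ such that the following holds: for every finite family $\mathcal{F}$ of convex sets in $\mathbb{R}^d$, if every $h$ or fewer sets of $\mathcal{F}$ have a point of $X$ in their intersection, then the intersection of all sets of $\mathcal{F}$ contains a point of $X$. If no such $h$ exists, $h(X)=\infty$. Equivalently (for discrete $X$), $h(X)$ equals the maximum size of a set $T\subseteq X$ such that $\mathrm{conv}(T)\cap X$ consists only of vertices of $\mathrm{conv}(T)$. *)

From Stdlib Require Import Reals ZArith List.
Open Scope R_scope.

Definition point := (R * R)%type.

Definition convex (C : point -> Prop) : Prop :=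
  forall p q : point, C p -> C q -> forall t : R, 0 <= t <= 1 ->
    C ((1 - t) * fst p + t * fst q, (1 - t) * snd p + t * snd q).

Definition helly_prop (X : point -> Prop) (h : nat) : Prop :=
  forall F : list (point -> Prop),
    (forall C, In C F -> convex C) ->
    (forall G : list (point -> Prop), incl G F -> (length G <= h)%nat ->
        exists x, X x /\ forall C, In C G -> C x) ->
    exists x, X x /\ forall C, In C F -> C x.

Definition is_helly_number (X : point -> Prop) (h : nat) : Prop :=
  helly_prop X h /\ forall h', helly_prop X h' -> (h <= h')%nat.

Definition inA (m : Z) : Prop := (m mod 3 = 0)%Z \/ (m mod 3 = 1)%Z.

Definition A2 (p : point) : Prop :=
  exists m n : Z, fst p = IZR m /\ snd p = IZR n /\ inA m /\ inA n.

(* By Helly's reduction it suffices that any nine points [T 0], ..., [T 8] of A^2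
   have a point of A^2 in every hull conv(T \ T j).  Suppose not, and take such a configuration
   whose hull contains the fewest lattice points.  Then every [T i] is an extreme point.  As A^2
   has four classes modulo 3, three of the nine points are congruent modulo 3, and their triangle
   contains a point [y] of A^2 which is not a vertex.  If [y] misses conv(T \ T j), replacing
   [T j] by [y] strictly shrinks the hull, so the new configuration has a good point [z]; but [z]
   lies in more of the hulls conv(T \ T k) than [y], and repeating this gives a good point for [T].  The eight halfplanes cutting single vertices off a suitable octagon with vertices
   in A^2 contain no common point of A^2, although any seven of them share a vertex. *)

From Stdlib Require Import Reals ZArith List Lia Lra.
From Stdlib Require Import Classical ClassicalDescription.
Open Scope R_scope.

Fixpoint rsum (n : nat) (f : nat -> R) : R :=
  match n with O => 0 | S m => rsum m f + f m end.

Definition upd {A : Type} (f : nat -> A) (j : nat) (a : A) : nat -> A :=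
  fun k => if Nat.eqb k j then a else f k.

Definition delta (i k : nat) : R := if Nat.eqb k i then 1 else 0.

Lemma bounded_choice {B : Type} (P : nat -> B -> Prop) (b0 : B) m :
  (forall j, (j < m)%nat -> exists x, P j x) ->
  exists f : nat -> B, forall j, (j < m)%nat -> P j (f j).
Proof.
  induction m as [|m IH]; intros H; [exists (fun _ => b0); lia|].
  destruct IH as [f Hf]; [intros j Hj; apply H; lia|].
  destruct (H m ltac:(lia)) as [x Hx].
  exists (upd f m x); intros j Hj; unfold upd.
  destruct (Nat.eqb_spec j m) as [->|Hjm]; [assumption | apply Hf; lia].
Qed.

Lemma rsum_ext n f g : (forall k, (k < n)%nat -> f k = g k) -> rsum n f = rsum n g.
Proof.
  induction n as [|n IH]; intros H; simpl; [reflexivity|].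
  rewrite IH by (intros; apply H; lia).
  rewrite H by lia; reflexivity.
Qed.

Lemma rsum_le n f g : (forall k, (k < n)%nat -> f k <= g k) -> rsum n f <= rsum n g.
Proof.
  induction n as [|n IH]; intros H; simpl; [lra|].
  assert (rsum n f <= rsum n g) by (apply IH; intros; apply H; lia).
  assert (f n <= g n) by (apply H; lia).
  lra.
Qed.

Lemma rsum_add n f g : rsum n (fun k => f k + g k) = rsum n f + rsum n g.
Proof. induction n as [|n IH]; simpl; [|rewrite IH]; ring. Qed.

Lemma rsum_scal n c f : rsum n (fun k => c * f k) = c * rsum n f.
Proof. induction n as [|n IH]; simpl; [|rewrite IH]; ring. Qed.

Lemma rsum_zero n : rsum n (fun _ => 0) = 0.
Proof. induction n as [|n IH]; simpl; [|rewrite IH]; ring. Qed.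

Lemma rsum_nonneg n f : (forall k, (k < n)%nat -> 0 <= f k) -> 0 <= rsum n f.
Proof. intros H. rewrite <- (rsum_zero n). now apply rsum_le. Qed.

Lemma rsum_upd n f i a : (i < n)%nat -> rsum n (upd f i a) = rsum n f - f i + a.
Proof.
  induction n as [|n IH]; intros Hi; simpl; [lia|].
  unfold upd at 2; destruct (Nat.eqb_spec n i) as [->|Hne].
  - rewrite (rsum_ext i (upd f i a) f); [ring|].
    intros k Hk; unfold upd; destruct (Nat.eqb_spec k i); [lia|reflexivity].
  - rewrite IH by lia; ring.
Qed.

Lemma rsum_delta n i f : (i < n)%nat -> rsum n (fun k => delta i k * f k) = f i.
Proof.
  intros Hi.
  rewrite (rsum_ext n _ (upd (fun _ => 0) i (f i))).
  - rewrite rsum_upd, rsum_zero by assumption; ring.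
  - intros k _; unfold delta, upd; destruct (Nat.eqb_spec k i) as [->|]; ring.
Qed.

Lemma rsum_elem_le n f i : (forall k, (k < n)%nat -> 0 <= f k) -> (i < n)%nat -> f i <= rsum n f.
Proof.
  intros H Hi.
  assert (Hrest : 0 <= rsum n (upd f i 0)).
  { apply rsum_nonneg; intros k Hk; unfold upd; destruct (Nat.eqb k i); [lra|auto]. }
  rewrite rsum_upd in Hrest by assumption; lra.
Qed.

Lemma rsum_convex_abs_le n w x M : (forall k, 0 <= w k) -> rsum n w = 1 ->
  (forall k, (k < n)%nat -> Rabs (x k) <= M) -> Rabs (rsum n (fun k => w k * x k)) <= M.
Proof.
  intros W0 W1 Hx.
  assert (HM : forall c, rsum n (fun k => w k * c) = c).
  { intros c; rewrite (rsum_ext n _ (fun k => c * w k)), rsum_scal, W1 by (intros; ring); ring. }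
  apply Rabs_le; split; [rewrite <- (HM (- M)) | rewrite <- (HM M)]; apply rsum_le;
    intros k Hk; (apply Rmult_le_compat_l; [apply W0|]).
  - pose proof (Rle_abs (- x k)); rewrite Rabs_Ropp in *; specialize (Hx k Hk); lra.
  - pose proof (Rle_abs (x k)); specialize (Hx k Hk); lra.
Qed.

Lemma rsum_eq0 n f : (forall k, (k < n)%nat -> 0 <= f k) -> rsum n f = 0 ->
  forall k, (k < n)%nat -> f k = 0.
Proof.
  intros H0 Hs k Hk.
  pose proof (rsum_elem_le n f k H0 Hk); specialize (H0 k Hk); lra.
Qed.

Lemma convex_normalized_rsum C m w T : convex C -> (forall k, 0 <= w k) ->
  (forall k, (k < m)%nat -> w k = 0 \/ C (T k)) -> 0 < rsum m w ->
  C (rsum m (fun k => w k * fst (T k)) / rsum m w, rsum m (fun k => w k * snd (T k)) / rsum m w).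
Proof.
  intros HC W0; induction m as [|m IH]; intros HT Hpos; simpl in *; [lra|].
  assert (Hs : 0 <= rsum m w) by (apply rsum_nonneg; auto).
  destruct (HT m ltac:(lia)) as [Ht|Hm]; rewrite ?Ht in *;
    set (s := rsum m w) in *; set (t := w m) in *;
    set (sx := rsum m (fun k => w k * fst (T k))); set (sy := rsum m (fun k => w k * snd (T k))).
  - replace ((sx + 0 * fst (T m)) / (s + 0)) with (sx / s) by (field; lra).
    replace ((sy + 0 * snd (T m)) / (s + 0)) with (sy / s) by (field; lra).
    apply IH; [intros; apply HT; lia | lra].
  - destruct (Req_dec s 0) as [Hs0|Hs0].
    + assert (Hz : forall k, (k < m)%nat -> w k = 0) by (apply rsum_eq0; auto).
      assert (sx = 0 /\ sy = 0) as [-> ->].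
      { unfold sx, sy; split; rewrite <- (rsum_zero m); apply rsum_ext;
          intros k Hk; rewrite Hz by assumption; ring. }
      rewrite Hs0; destruct (T m) as [a b] eqn:E; simpl.
      replace ((0 + t * a) / (0 + t)) with a by (field; lra).
      replace ((0 + t * b) / (0 + t)) with b by (field; lra).
      assumption.
    + set (lam := t / (s + t)).
      assert (Hl : 0 <= lam <= 1).
      { assert (lam * (s + t) = t) by (unfold lam; field; lra).
        assert (0 <= t) by apply W0; split; nra. }
      pose proof (HC _ _ (IH ltac:(intros; apply HT; lia) ltac:(lra)) Hm lam Hl) as H; simpl in H.
      replace ((sx + t * fst (T m)) / (s + t)) with ((1 - lam) * (sx / s) + lam * fst (T m))
        by (unfold lam; field; lra).
      replace ((sy + t * snd (T m)) / (s + t)) with ((1 - lam) * (sy / s) + lam * snd (T m))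
        by (unfold lam; field; lra).
      exact H.
Qed.

Section Hull.

Variable n : nat.

Definition combo (w : nat -> R) (T : nat -> point) : point :=
  (rsum n (fun k => w k * fst (T k)), rsum n (fun k => w k * snd (T k))).

Definition weights (E : nat -> Prop) (w : nat -> R) : Prop :=
  (forall k, 0 <= w k) /\ (forall k, E k -> w k = 0) /\ rsum n w = 1.

(* [in_hull T E y]: [y] is in the convex hull of the points [T k] with [k < n] and [~ E k]. *)
Definition in_hull (T : nat -> point) (E : nat -> Prop) (y : point) : Prop :=
  exists w, weights E w /\ y = combo w T.

Definition hull (T : nat -> point) : point -> Prop := in_hull T (fun _ => False).

Definition extreme (T : nat -> point) (i : nat) : Prop := ~ in_hull T (eq i) (T i).

Lemma weights_weaken E E' w : (forall k, E' k -> E k) -> weights E w -> weights E' w.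
Proof. intros H (W0 & WE & W1); repeat split; auto. Qed.

Lemma in_hull_weaken T E E' y : (forall k, E' k -> E k) -> in_hull T E y -> in_hull T E' y.
Proof. intros H [w [Hw ->]]; exists w; split; [apply (weights_weaken E)|]; auto. Qed.

Lemma in_hull_ext T T' E y : (forall k, (k < n)%nat -> ~ E k -> T k = T' k) ->
  in_hull T E y -> in_hull T' E y.
Proof.
  intros HT [w [[W0 [WE W1]] ->]]; exists w; split; [repeat split; assumption|].
  unfold combo; f_equal; apply rsum_ext; intros k Hk;
    (destruct (classic (E k)) as [Ek|Ek]; [rewrite WE by assumption; ring | now rewrite HT]).
Qed.

Lemma in_hull_vertex T E i : (i < n)%nat -> ~ E i -> in_hull T E (T i).
Proof.
  intros Hi HE; exists (delta i); split; [repeat split|].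
  - intros k; unfold delta; destruct (Nat.eqb k i); lra.
  - intros k Hk; unfold delta; destruct (Nat.eqb_spec k i); [subst; contradiction | reflexivity].
  - rewrite (rsum_ext n _ (fun k => delta i k * 1)) by (intros; ring); now rewrite rsum_delta.
  - unfold combo; rewrite !rsum_delta by assumption; now destruct (T i).
Qed.

Lemma in_hull_convex C T E y : convex C -> (forall k, (k < n)%nat -> ~ E k -> C (T k)) ->
  in_hull T E y -> C y.
Proof.
  intros HC HT [w [[W0 [WE W1]] ->]].
  pose proof (convex_normalized_rsum C n w T HC W0) as H; rewrite W1 in H.
  unfold combo; rewrite <- (Rdiv_1_r (rsum n _)), <- (Rdiv_1_r (rsum n (fun k => _ * snd _))).
  apply H; [|lra].
  intros k Hk; destruct (classic (E k)); [left; auto | right; auto].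
Qed.

Lemma combo_weight_one w T i : (forall k, 0 <= w k) -> rsum n w = 1 -> (i < n)%nat -> w i = 1 ->
  combo w T = T i.
Proof.
  intros W0 W1 Hi Wi.
  assert (Hw : forall k, (k < n)%nat -> w k = delta i k).
  { intros k Hk; unfold delta; destruct (Nat.eqb_spec k i) as [->|Hne]; [assumption|].
    assert (Hz : rsum n (upd w i 0) = 0) by (rewrite rsum_upd by assumption; lra).
    apply rsum_eq0 with (k := k) in Hz; auto.
    - unfold upd in Hz; destruct (Nat.eqb_spec k i); [contradiction | assumption].
    - intros l _; unfold upd; destruct (Nat.eqb l i); [lra | auto]. }
  unfold combo; rewrite (rsum_ext n _ (fun k => delta i k * fst (T k))),
    (rsum_ext n (fun k => w k * snd (T k)) (fun k => delta i k * snd (T k))), !rsum_delta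
    by (auto; intros k Hk; now rewrite Hw).
  now destruct (T i).
Qed.

Lemma in_hull_drop_vertex w T i : (forall k, 0 <= w k) -> rsum n w = 1 -> (i < n)%nat ->
  w i < 1 -> T i = combo w T -> in_hull T (eq i) (T i).
Proof.
  intros W0 W1 Hi Wi HT.
  (* From [T i = w i T i + sum_{k <> i} w k T k], the point [T i] is a convex combination of
     the other points with weights [w k / (1 - w i)]. *)
  assert (Hcoord : forall g : point -> R, g (T i) = rsum n (fun k => w k * g (T k)) ->
            g (T i) = rsum n (fun k => / (1 - w i) * upd w i 0 k * g (T k))).
  { intros g Hg.
    rewrite (rsum_ext n _ (fun k => / (1 - w i) * upd (fun k => w k * g (T k)) i 0 k))
      by (intros k _; unfold upd; destruct (Nat.eqb k i); ring).
    rewrite rsum_scal, rsum_upd, <- Hg by assumption; field; lra. }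
  exists (fun k => / (1 - w i) * upd w i 0 k); split; [repeat split|].
  - intros k; apply Rmult_le_pos; [left; apply Rinv_0_lt_compat; lra|].
    unfold upd; destruct (Nat.eqb k i); [lra | auto].
  - intros k <-; unfold upd; rewrite Nat.eqb_refl; ring.
  - rewrite rsum_scal, rsum_upd, W1 by assumption; field; lra.
  - unfold combo; rewrite <- !Hcoord; [now destruct (T i) | |];
      rewrite HT at 1; reflexivity.
Qed.

Lemma extreme_weight_one T i w : extreme T i -> (forall k, 0 <= w k) -> rsum n w = 1 ->
  (i < n)%nat -> T i = combo w T -> w i = 1.
Proof.
  intros Hx W0 W1 Hi HT.
  assert (w i <= 1) by (rewrite <- W1; apply rsum_elem_le; auto).
  destruct (Rlt_or_le (w i) 1); [|lra].
  exfalso; apply Hx, (in_hull_drop_vertex w); assumption.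
Qed.

Lemma combo_upd T j u v : (j < n)%nat ->
  combo v (upd T j (combo u T)) = combo (fun k => upd v j 0 k + v j * u k) T.
Proof.
  intros Hj.
  assert (Hcoord : forall (g : point -> R) y, g y = rsum n (fun k => u k * g (T k)) ->
            rsum n (fun k => v k * g (upd T j y k))
            = rsum n (fun k => (upd v j 0 k + v j * u k) * g (T k))).
  { intros g y Hg.
    rewrite (rsum_ext n _ (upd (fun k => v k * g (T k)) j (v j * g y)))
      by (intros k _; unfold upd; destruct (Nat.eqb_spec k j) as [->|]; reflexivity).
    rewrite (rsum_ext n (fun k => _ * g (T k))
               (fun k => upd (fun k => v k * g (T k)) j 0 k + v j * (u k * g (T k))))
      by (intros k _; unfold upd; destruct (Nat.eqb k j); ring).
    rewrite rsum_add, rsum_scal, !rsum_upd, <- Hg by assumption; ring. }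
  unfold combo at 1; rewrite !(Hcoord _ (combo u T)) by reflexivity; reflexivity.
Qed.

Lemma weights_upd E u v j : (j < n)%nat -> weights E u -> weights E v ->
  weights E (fun k => upd v j 0 k + v j * u k).
Proof.
  intros Hj (U0 & UE & U1) (V0 & VE & V1); repeat split.
  - intros k; pose proof (U0 k); pose proof (V0 j);
      unfold upd; destruct (Nat.eqb k j); [|pose proof (V0 k)]; nra.
  - intros k Ek; rewrite UE by assumption;
      unfold upd; destruct (Nat.eqb k j); [|rewrite VE by assumption]; ring.
  - rewrite rsum_add, rsum_scal, rsum_upd, U1, V1 by assumption; ring.
Qed.

Lemma in_hull_upd T E j y z : (j < n)%nat -> in_hull T E y -> in_hull (upd T j y) E z ->
  in_hull T E z.
Proof.
  intros Hj [u [Hu ->]] [v [Hv ->]].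
  exists (fun k => upd v j 0 k + v j * u k); split; [now apply weights_upd|].
  now apply combo_upd.
Qed.

(* If the extreme point [T i] were a combination of [upd T j y], all of its weight would have
   to come from [y], forcing [y = T i]. *)
Lemma extreme_not_upd_combo T i j y v : extreme T i -> hull T y -> y <> T i ->
  (i < n)%nat -> (j < n)%nat -> weights (fun _ => False) v -> (i = j \/ v i = 0) ->
  T i <> combo v (upd T j y).
Proof.
  intros Hx [u [Hu ->]] Hy Hi Hj Hv Hvi HT.
  rewrite combo_upd in HT by assumption.
  destruct (weights_upd _ u v j Hj Hu Hv) as (C0 & _ & C1).
  pose proof (extreme_weight_one T i _ Hx C0 C1 Hi HT) as Hc.
  destruct Hu as (U0 & _ & U1), Hv as (V0 & _ & V1).
  assert (upd v j 0 i = 0)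
    by (unfold upd; destruct (Nat.eqb_spec i j); [reflexivity | destruct Hvi; [contradiction|]];
        assumption).
  assert (v j <= 1) by (rewrite <- V1; apply rsum_elem_le; auto).
  assert (u i <= 1) by (rewrite <- U1; apply rsum_elem_le; auto).
  pose proof (U0 i); pose proof (V0 j).
  apply Hy, combo_weight_one; auto; nra.
Qed.

Lemma extreme_upd T i j y : (i < n)%nat -> (j < n)%nat -> i <> j -> extreme T i -> hull T y ->
  y <> T i -> extreme (upd T j y) i.
Proof.
  intros Hi Hj Hij Hx Hy Hne [v [Hv HT]].
  assert (Hui : upd T j y i = T i)
    by (unfold upd; destruct (Nat.eqb_spec i j); [contradiction | reflexivity]).
  rewrite Hui in HT.
  apply (extreme_not_upd_combo T i j y v); auto.
  - apply (weights_weaken (eq i)); [contradiction | assumption].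
  - right; destruct Hv as (_ & VE & _); auto.
Qed.

Lemma upd_vertex_not_in_hull T j y : (j < n)%nat -> extreme T j -> hull T y -> y <> T j ->
  ~ hull (upd T j y) (T j).
Proof.
  intros Hj Hx Hy Hne [v [Hv HT]].
  exact (extreme_not_upd_combo T j j y v Hx Hy Hne Hj Hj Hv (or_introl eq_refl) HT).
Qed.

Lemma hull_coord_bound T M y :
  (forall k, (k < n)%nat -> Rabs (fst (T k)) <= M /\ Rabs (snd (T k)) <= M) ->
  hull T y -> Rabs (fst y) <= M /\ Rabs (snd y) <= M.
Proof.
  intros HT [w [(W0 & _ & W1) ->]]; split; apply rsum_convex_abs_le; auto; apply HT.
Qed.

End Hull.

Fixpoint countP {A : Type} (P : A -> Prop) (l : list A) : nat :=
  match l with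
  | nil => O
  | a :: l' => ((if excluded_middle_informative (P a) then 1 else 0) + countP P l')%nat
  end.

Lemma countP_le {A : Type} (P Q : A -> Prop) l : (forall a, In a l -> P a -> Q a) ->
  (countP P l <= countP Q l)%nat.
Proof.
  induction l as [|b l IH]; intros H; simpl; [lia|].
  specialize (IH (fun a Ha => H a (or_intror Ha))).
  destruct (excluded_middle_informative (P b)), (excluded_middle_informative (Q b)); try lia.
  exfalso; auto using in_eq.
Qed.

Lemma countP_lt {A : Type} (P Q : A -> Prop) l a : (forall a, In a l -> P a -> Q a) ->
  In a l -> Q a -> ~ P a -> (countP P l < countP Q l)%nat.
Proof.
  induction l as [|b l IH]; intros H Ha HQ HP; simpl; [contradiction|].
  pose proof (countP_le P Q l (fun a Ha => H a (or_intror Ha))).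
  destruct Ha as [->|Ha].
  - destruct (excluded_middle_informative (P a)), (excluded_middle_informative (Q a)); tauto || lia.
  - specialize (IH (fun a Ha => H a (or_intror Ha)) Ha HQ HP).
    destruct (excluded_middle_informative (P b)), (excluded_middle_informative (Q b)); try lia.
    exfalso; auto using in_eq.
Qed.

Definition Zrange (N : Z) : list Z :=
  map (fun i => (Z.of_nat i - N)%Z) (seq 0 (Z.to_nat (2 * N + 1))).

Definition grid (N : Z) : list point :=
  map (fun mn => (IZR (fst mn), IZR (snd mn))) (list_prod (Zrange N) (Zrange N)).

Lemma in_Zrange N m : (Z.abs m <= N)%Z -> In m (Zrange N).
Proof.
  intros H; apply in_map_iff; exists (Z.to_nat (m + N)); split; [lia|].
  apply in_seq; lia.
Qed.

Lemma in_grid N p : Rabs (fst p) < IZR N -> Rabs (snd p) < IZR N ->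
  (exists a b : Z, p = (IZR a, IZR b)) -> In p (grid N).
Proof.
  intros Hx Hy [a [b ->]]; simpl in Hx, Hy; rewrite <- abs_IZR in Hx, Hy.
  apply lt_IZR in Hx, Hy.
  apply in_map_iff; exists (a, b); split; [reflexivity|].
  apply in_prod; apply in_Zrange; lia.
Qed.

Section Descent.

Variable X : point -> Prop.
Variable n : nat.

Hypothesis X_integral : forall p, X p -> exists a b : Z, p = (IZR a, IZR b).

Hypothesis interior_point : forall T, (forall k, (k < n)%nat -> X (T k)) ->
  (forall i, (i < n)%nat -> extreme n T i) ->
  exists y, X y /\ hull n T y /\ forall i, (i < n)%nat -> y <> T i.

Definition subhull_point (T : nat -> point) (y : point) : Prop :=
  X y /\ forall j, (j < n)%nat -> in_hull n T (eq j) y.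

Definition defect (T : nat -> point) (y : point) : nat :=
  countP (fun j => ~ in_hull n T (eq j) y) (seq 0 n).

Definition hull_radius (T : nat -> point) : Z :=
  up (rsum n (fun k => Rabs (fst (T k)) + Rabs (snd (T k)))).

Lemma hull_in_grid T p : hull n T p -> X p -> In p (grid (hull_radius T)).
Proof.
  intros Hp Xp.
  set (M := rsum n (fun k => Rabs (fst (T k)) + Rabs (snd (T k)))).
  assert (HM : forall k, (k < n)%nat -> Rabs (fst (T k)) <= M /\ Rabs (snd (T k)) <= M).
  { intros k Hk.
    assert (Rabs (fst (T k)) + Rabs (snd (T k)) <= M)
      by (apply (rsum_elem_le n (fun k => Rabs (fst (T k)) + Rabs (snd (T k)))); auto;
          intros; pose proof (Rabs_pos (fst (T k0))); pose proof (Rabs_pos (snd (T k0))); lra).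
    pose proof (Rabs_pos (fst (T k))); pose proof (Rabs_pos (snd (T k))); lra. }
  destruct (hull_coord_bound n T M p HM Hp).
  pose proof (archimed M) as [HN _].
  apply in_grid; auto; unfold hull_radius; fold M; lra.
Qed.

Lemma no_subhull_point_extreme T : (forall k, (k < n)%nat -> X (T k)) ->
  ~ (exists y, subhull_point T y) -> forall i, (i < n)%nat -> extreme n T i.
Proof.
  intros HX Hno i Hi Hin; apply Hno; exists (T i); split; [auto|].
  intros j Hj; destruct (Nat.eq_dec i j) as [<-|Hij]; [assumption|].
  now apply in_hull_vertex.
Qed.

(* Replacing a vertex [T j] by a point [y] outside the [j]-th subhull, a subhull point of the new
   configuration lies in every subhull of [T] containing [y], and also in the [j]-th. *)
Lemma upd_subhull_point_defect T j y z : (forall i, (i < n)%nat -> extreme n T i) ->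
  hull n T y -> (forall i, (i < n)%nat -> y <> T i) -> (j < n)%nat -> ~ in_hull n T (eq j) y ->
  subhull_point (upd T j y) z ->
  hull n T z /\ (forall i, (i < n)%nat -> z <> T i) /\ (defect T z < defect T y)%nat.
Proof.
  intros Hext Hy Hne Hj Hjy [Xz Hz].
  assert (HzT : hull n (upd T j y) z)
    by (apply (in_hull_weaken n _ (eq j)); [contradiction | auto]).
  split; [|split].
  - now apply (in_hull_upd n T _ j y).
  - intros i Hi ->; destruct (Nat.eq_dec i j) as [->|Hij].
    + exact (upd_vertex_not_in_hull n T j y Hj (Hext j Hj) Hy (Hne j Hj) HzT).
    + apply (extreme_upd n T i j y Hi Hj Hij (Hext i Hi) Hy (Hne i Hi)).
      unfold upd at 2; destruct (Nat.eqb_spec i j); [contradiction|].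
      now apply Hz.
  - apply (countP_lt _ _ _ j).
    + intros k Hk%in_seq Hkz Hky; apply Hkz.
      destruct (Nat.eq_dec k j) as [->|Hkj]; [contradiction|].
      apply (in_hull_upd n T _ j y); [assumption | assumption | apply Hz; lia].
    + apply in_seq; lia.
    + assumption.
    + intros Hjz; apply Hjz, (in_hull_ext n (upd T j y)); [|now apply Hz].
      intros k _ Hk; unfold upd; destruct (Nat.eqb_spec k j); [congruence | reflexivity].
Qed.

Lemma subhull_point_exists_in T0 : forall m T, (forall k, (k < n)%nat -> X (T k)) ->
  (forall p, hull n T p -> hull n T0 p) ->
  (countP (hull n T) (grid (hull_radius T0)) < m)%nat -> exists y, subhull_point T y.
Proof.
  induction m as [|m IH]; intros T HX Hsub Hm; [lia|].
  apply NNPP; intros Hno.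
  pose proof (no_subhull_point_extreme T HX Hno) as Hext.
  destruct (interior_point T HX Hext) as [y0 [Xy0 [Hy0 Hne0]]].
  enough (Hdesc : forall d y, X y -> hull n T y -> (forall i, (i < n)%nat -> y <> T i) ->
                    (defect T y < d)%nat -> False) by (eapply Hdesc; eauto).
  induction d as [|d IHd]; intros y Xy Hy Hne Hd; [lia|].
  assert (Hj : exists j, (j < n)%nat /\ ~ in_hull n T (eq j) y).
  { apply NNPP; intros Hall; apply Hno; exists y; split; [assumption|].
    intros j Hj; apply NNPP; intros Hjy; apply Hall; eauto. }
  destruct Hj as [j [Hj Hjy]].
  destruct (IH (upd T j y)) as [z Hz].
  - intros k Hk; unfold upd; destruct (Nat.eqb k j); auto.
  - intros p Hp; apply Hsub, (in_hull_upd n T _ j y); assumption.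
  - enough (countP (hull n (upd T j y)) (grid (hull_radius T0))
            < countP (hull n T) (grid (hull_radius T0)))%nat by lia.
    apply (countP_lt _ _ _ (T j)).
    + intros p _; apply (in_hull_upd n T _ j y); assumption.
    + apply hull_in_grid; auto; apply Hsub, in_hull_vertex; auto.
    + apply in_hull_vertex; auto.
    + apply upd_vertex_not_in_hull; auto.
  - destruct (upd_subhull_point_defect T j y z Hext Hy Hne Hj Hjy Hz) as (HzT & Hzne & Hzd).
    apply (IHd z); [apply Hz | assumption | assumption | lia].
Qed.

Theorem subhull_point_exists T : (forall k, (k < n)%nat -> X (T k)) -> exists y, subhull_point T y.
Proof.
  intros HX.
  apply (subhull_point_exists_in T (S (countP (hull n T) (grid (hull_radius T)))) T); auto.
Qed.

End Descent.

Definition meets (X : point -> Prop) (G : list (point -> Prop)) : Prop :=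
  exists x, X x /\ forall C, In C G -> C x.

Definition remove_at {A : Type} (k : nat) (l : list A) : list A := firstn k l ++ skipn (S k) l.

Lemma in_firstn_in {A : Type} (x : A) k l : In x (firstn k l) -> In x l.
Proof. intros H; rewrite <- (firstn_skipn k l); apply in_or_app; now left. Qed.

Lemma in_skipn_in {A : Type} (x : A) k l : In x (skipn k l) -> In x l.
Proof. intros H; rewrite <- (firstn_skipn k l); apply in_or_app; now right. Qed.

Lemma nth_in_firstn {A : Type} (l : list A) h j d : (j < h)%nat -> (j < length l)%nat ->
  In (nth j l d) (firstn h l).
Proof.
  intros Hj Hh; replace (nth j l d) with (nth j (firstn h l) d)
    by (rewrite nth_firstn; apply Nat.ltb_lt in Hj; now rewrite Hj).
  apply nth_In; rewrite length_firstn; lia.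
Qed.

Lemma in_firstn_nth {A : Type} (l : list A) h d x : In x (firstn h l) ->
  exists j, (j < h)%nat /\ nth j l d = x.
Proof.
  intros Hx; destruct (In_nth _ _ d Hx) as [j [Hj <-]]; rewrite length_firstn in Hj.
  exists j; split; [lia|].
  rewrite nth_firstn; replace (j <? h) with true by (symmetry; apply Nat.ltb_lt; lia); reflexivity.
Qed.

Lemma incl_remove_at {A : Type} k (l : list A) : incl (remove_at k l) l.
Proof. intros x Hx; apply in_app_or in Hx as [Hx|Hx]; eauto using in_firstn_in, in_skipn_in. Qed.

Lemma length_remove_at {A : Type} k (l : list A) : (k < length l)%nat ->
  length (remove_at k l) = (length l - 1)%nat.
Proof. intros H; unfold remove_at; rewrite length_app, length_firstn, length_skipn; lia. Qed.

Lemma nth_in_remove_at {A : Type} k j (l : list A) d : j <> k -> (j < length l)%nat ->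
  In (nth j l d) (remove_at k l).
Proof.
  intros Hjk Hj; unfold remove_at; apply in_or_app.
  destruct (Nat.lt_ge_cases j k) as [Hlt|Hge].
  - left; apply nth_in_firstn; lia.
  - right; replace (nth j l d) with (nth (j - S k) (skipn (S k) l) d)
      by (rewrite nth_skipn; f_equal; lia).
    apply nth_In; rewrite length_skipn; lia.
Qed.

Lemma in_skipn_remove_at {A : Type} h k (l : list A) x : (k < h)%nat -> In x (skipn h l) ->
  In x (remove_at k l).
Proof.
  intros Hk Hx; apply in_or_app; right.
  replace h with (h - S k + S k)%nat in Hx by lia; rewrite <- skipn_skipn in Hx.
  exact (in_skipn_in x _ _ Hx).
Qed.

Section HellyReduction.

Variable X : point -> Prop.
Variable h : nat.

Hypothesis helly_family : forall (C : nat -> point -> Prop) (x : nat -> point),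
  (forall j, (j < S h)%nat -> convex (C j)) -> (forall k, (k < S h)%nat -> X (x k)) ->
  (forall j k, (j < S h)%nat -> (k < S h)%nat -> j <> k -> C j (x k)) ->
  exists y, X y /\ forall j, (j < S h)%nat -> C j y.

(* Apply [helly_family] to the first [h] members of [G] and the intersection of the others. *)
Lemma meets_of_proper_sublists G : (h < length G)%nat -> (forall C, In C G -> convex C) ->
  (forall G', incl G' G -> (length G' < length G)%nat -> meets X G') -> meets X G.
Proof.
  intros Hlen HG Hsub.
  set (d := fun _ : point => True).
  set (D := fun p => forall C, In C (skipn h G) -> C p).
  set (C := fun j => if Nat.ltb j h then nth j G d else D).
  set (sub := fun j => if Nat.ltb j h then remove_at j G else firstn h G).
  destruct (bounded_choice (fun j x => X x /\ forall c, In c (sub j) -> c x) (0, 0) (S h))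
    as [x Hx].
  { intros j Hj; unfold sub; destruct (Nat.ltb_spec j h); apply Hsub;
      [apply incl_remove_at | rewrite length_remove_at; lia
      | intros c; apply in_firstn_in | rewrite length_firstn; lia]. }
  destruct (helly_family C x) as [y [Xy Hy]].
  - intros j Hj; unfold C; destruct (Nat.ltb_spec j h).
    + apply HG, nth_In; lia.
    + intros p q Hp Hq t Ht c Hc; apply (HG c (in_skipn_in c _ _ Hc));
        [apply Hp | apply Hq | ]; assumption.
  - intros k Hk; exact (proj1 (Hx k Hk)).
  - intros j k Hj Hk Hjk; unfold C; destruct (Nat.ltb_spec j h) as [Hjh|Hjh].
    + apply Hx; [assumption|]; unfold sub; destruct (Nat.ltb_spec k h).
      * apply nth_in_remove_at; lia.
      * apply nth_in_firstn; lia.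
    + intros c Hc; apply Hx; [assumption|]; unfold sub; destruct (Nat.ltb_spec k h); [|lia].
      apply (in_skipn_remove_at h); assumption.
  - exists y; split; [assumption|]; intros c Hc.
    rewrite <- (firstn_skipn h G) in Hc; apply in_app_or in Hc as [Hc|Hc].
    + destruct (in_firstn_nth G h d c Hc) as [j [Hj <-]].
      specialize (Hy j ltac:(lia)); unfold C in Hy; apply Nat.ltb_lt in Hj; rewrite Hj in Hy.
      exact Hy.
    + specialize (Hy h ltac:(lia)); unfold C in Hy; rewrite Nat.ltb_irrefl in Hy; exact (Hy c Hc).
Qed.

Lemma helly_prop_of_families : helly_prop X h.
Proof.
  intros F HF Hsmall.
  enough (H : forall m G, (length G <= m)%nat -> incl G F -> meets X G)
    by (apply (H (length F)); auto using incl_refl).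
  induction m as [|m IH]; intros G Hlen HG; [apply Hsmall; auto; lia|].
  destruct (le_lt_dec (length G) h) as [Hle|Hgt]; [now apply Hsmall|].
  apply meets_of_proper_sublists; auto.
  intros G' HG' Hlen'; apply IH; [lia | intros c Hc; apply HG, HG', Hc].
Qed.

End HellyReduction.

Lemma helly_prop_of_subhull_points X h :
  (forall T, (forall k, (k < S h)%nat -> X (T k)) -> exists y, subhull_point X (S h) T y) ->
  helly_prop X h.
Proof.
  intros Hsub; apply helly_prop_of_families; intros C x HC HX HCx.
  destruct (Hsub x HX) as [y [Xy Hy]]; exists y; split; [assumption|].
  intros j Hj; apply (in_hull_convex (S h) (C j) x (eq j)); auto.
Qed.

Lemma helly_prop_lower_bound X h m (H : nat -> point -> Prop) (x : nat -> point) :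
  (forall i, convex (H i)) -> (forall k, (k < m)%nat -> X (x k)) ->
  (forall i k, (i < m)%nat -> (k < m)%nat -> (H i (x k) <-> i <> k)) ->
  (forall p, X p -> exists i, (i < m)%nat /\ ~ H i p) ->
  helly_prop X h -> (m <= h)%nat.
Proof.
  intros HC HX Hx Hempty Hh.
  destruct (le_lt_dec m h) as [|Hlt]; [assumption|exfalso].
  set (F := map H (seq 0 m)).
  assert (HF : forall c, In c F -> exists i, (i < m)%nat /\ c = H i).
  { intros c Hc; apply in_map_iff in Hc as [i [<- Hi%in_seq]]; exists i; split; [lia|reflexivity]. }
  destruct (Hh F) as [p [Xp Hp]].
  - intros c Hc; destruct (HF c Hc) as [i [_ ->]]; apply HC.
  - intros G HG Hlen.
    assert (Hk : exists k, (k < m)%nat /\ ~ In (H k) G).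
    { apply NNPP; intros Hall.
      assert (Hincl : incl F G).
      { intros c Hc; destruct (HF c Hc) as [k [Hk ->]]; apply NNPP; eauto. }
      assert (HnF : NoDup F).
      { apply NoDup_map_NoDup_ForallPairs; [|apply seq_NoDup].
        intros i k Hi%in_seq Hk%in_seq Hik; apply NNPP; intros Hne.
        assert (Hxk : H i (x k)) by (apply Hx; lia).
        rewrite Hik in Hxk; apply (Hx k k) in Hxk; lia. }
      pose proof (NoDup_incl_length HnF Hincl).
      unfold F in *; rewrite length_map, length_seq in *; lia. }
    destruct Hk as [k [Hk HkG]]; exists (x k); split; [auto|].
    intros c Hc; destruct (HF c (HG c Hc)) as [i [Hi ->]].
    apply Hx; [assumption | assumption | intros ->; contradiction].
  - destruct (Hempty p Xp) as [i [Hi Hni]]; apply Hni, Hp.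
    apply in_map_iff; exists i; split; [reflexivity | apply in_seq; lia].
Qed.

Lemma mod3_linear a b c e1 e2 :
  ((a + b * e1 + c * e2) mod 3 = (a mod 3 + b * (e1 mod 3) + c * (e2 mod 3)) mod 3)%Z.
Proof.
  rewrite <- (Z_mod_plus_full (a mod 3 + b * (e1 mod 3) + c * (e2 mod 3))
                              (a / 3 + b * (e1 / 3) + c * (e2 / 3))).
  f_equal.
  rewrite (Z.div_mod a 3) at 1 by lia; rewrite (Z.div_mod e1 3) at 1 by lia;
    rewrite (Z.div_mod e2 3) at 1 by lia.
  ring.
Qed.

Local Ltac inA_candidate b c :=
  exists b, c; split; [lia|];
  unfold inA; vm_compute; split; first [left; reflexivity | right; reflexivity].

(* The bounds on [b] and [c] make [(3 - b - c) / 3], [b / 3], [c / 3] convex weights below 1. *)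
Lemma inA_shift_residues a a' s1 s2 t1 t2 : (0 <= a <= 1)%Z -> (0 <= a' <= 1)%Z ->
  (0 <= s1 < 3)%Z -> (0 <= s2 < 3)%Z -> (0 <= t1 < 3)%Z -> (0 <= t2 < 3)%Z ->
  exists b c, (0 <= b <= 2 /\ 0 <= c <= 2 /\ 1 <= b + c <= 3)%Z /\
    inA (a + b * s1 + c * s2) /\ inA (a' + b * t1 + c * t2).
Proof.
  intros Ha Ha' H1 H2 H3 H4.
  assert (a = 0 \/ a = 1)%Z as [-> | ->] by lia;
  assert (a' = 0 \/ a' = 1)%Z as [-> | ->] by lia;
  assert (s1 = 0 \/ s1 = 1 \/ s1 = 2)%Z as [-> | [-> | ->]] by lia;
  assert (s2 = 0 \/ s2 = 1 \/ s2 = 2)%Z as [-> | [-> | ->]] by lia;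
  assert (t1 = 0 \/ t1 = 1 \/ t1 = 2)%Z as [-> | [-> | ->]] by lia;
  assert (t2 = 0 \/ t2 = 1 \/ t2 = 2)%Z as [-> | [-> | ->]] by lia;
  first [ inA_candidate 1%Z 0%Z | inA_candidate 2%Z 0%Z | inA_candidate 0%Z 1%Z
        | inA_candidate 0%Z 2%Z | inA_candidate 1%Z 1%Z | inA_candidate 2%Z 1%Z
        | inA_candidate 1%Z 2%Z ].
Qed.

Lemma inA_shift a a' e1 e2 f1 f2 : inA a -> inA a' ->
  exists b c, (0 <= b <= 2 /\ 0 <= c <= 2 /\ 1 <= b + c <= 3)%Z /\
    inA (a + b * e1 + c * e2) /\ inA (a' + b * f1 + c * f2).
Proof.
  intros Ha Ha'.
  destruct (inA_shift_residues (a mod 3) (a' mod 3) (e1 mod 3) (e2 mod 3) (f1 mod 3) (f2 mod 3))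
    as (b & c & Hbc & H1 & H2);
    try (unfold inA in *; lia); try (apply Z.mod_pos_bound; lia).
  exists b, c; split; [assumption|].
  unfold inA in *; rewrite mod3_linear, (mod3_linear a'); split; assumption.
Qed.

Lemma pigeonhole_three (f : nat -> nat) m l : NoDup l -> (forall k, In k l -> (f k < m)%nat) ->
  (2 * m < length l)%nat ->
  exists p q r, In p l /\ In q l /\ In r l /\ p <> q /\ p <> r /\ q <> r /\ f p = f q /\ f p = f r.
Proof.
  revert l; induction m as [|m IH]; intros l Hl Hf Hlen.
  - destruct l as [|k l]; simpl in Hlen; [lia|]; specialize (Hf k (in_eq k l)); lia.
  - pose proof (filter_length (fun k => Nat.eqb (f k) m) l) as Hsplit.
    remember (filter (fun k => Nat.eqb (f k) m) l) as top eqn:Etop.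
    destruct (le_lt_dec 3 (length top)) as [H3|H3].
    + assert (Htop : forall k, In k top -> In k l /\ f k = m)
        by (intros k Hk; rewrite Etop, filter_In, Nat.eqb_eq in Hk; exact Hk).
      assert (Hnd : NoDup top) by (rewrite Etop; now apply NoDup_filter).
      destruct top as [|p [|q [|r rest]]]; simpl in H3; try lia.
      destruct (Htop p) as [Hp Fp], (Htop q) as [Hq Fq], (Htop r) as [Hr Fr]; simpl; auto.
      apply NoDup_cons_iff in Hnd as [Hp' Hnd]; apply NoDup_cons_iff in Hnd as [Hq' _].
      exists p, q, r; repeat split; try assumption; try congruence;
        intros ->; simpl in *; tauto.
    + destruct (IH (filter (fun k => negb (Nat.eqb (f k) m)) l)) as (p & q & r & Hp & Hq & Hr & H).
      * now apply NoDup_filter.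
      * intros k Hk; apply filter_In in Hk as [Hk Hkm]; specialize (Hf k Hk).
        apply Bool.negb_true_iff, Nat.eqb_neq in Hkm; lia.
      * lia.
      * apply filter_In in Hp as [Hp _], Hq as [Hq _], Hr as [Hr _]; exists p, q, r; auto.
Qed.

Lemma A2_integral p : A2 p -> exists a b : Z, p = (IZR a, IZR b).
Proof. intros (a & b & E1 & E2 & _); exists a, b; destruct p; simpl in *; now subst. Qed.

Lemma A2_coords n T : (forall k, (k < n)%nat -> A2 (T k)) ->
  exists a b : nat -> Z,
    forall k, (k < n)%nat -> T k = (IZR (a k), IZR (b k)) /\ inA (a k) /\ inA (b k).
Proof.
  intros HT.
  destruct (bounded_choice (fun k (ab : Z * Z) =>
              T k = (IZR (fst ab), IZR (snd ab)) /\ inA (fst ab) /\ inA (snd ab)) (0, 0)%Z n)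
    as [f Hf].
  - intros k Hk; destruct (HT k Hk) as (a & b & E1 & E2 & Ha & Hb); exists (a, b); simpl.
    repeat split; auto; destruct (T k); simpl in *; now subst.
  - exists (fun k => fst (f k)), (fun k => snd (f k)); exact Hf.
Qed.

Lemma rsum_three_deltas n p q r (x y z : R) f : (p < n)%nat -> (q < n)%nat -> (r < n)%nat ->
  rsum n (fun k => (x * delta p k + y * delta q k + z * delta r k) * f k)
  = x * f p + y * f q + z * f r.
Proof.
  intros Hp Hq Hr.
  rewrite (rsum_ext n _ (fun k => x * (delta p k * f k) + y * (delta q k * f k)
                                 + z * (delta r k * f k))) by (intros; ring).
  rewrite !rsum_add, !rsum_scal, !rsum_delta by assumption; reflexivity.
Qed.

Lemma inA_class_eq x y u v : inA x -> inA y -> inA u -> inA v ->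
  Z.to_nat (2 * (x mod 3) + y mod 3) = Z.to_nat (2 * (u mod 3) + v mod 3) ->
  (x mod 3 = u mod 3 /\ y mod 3 = v mod 3)%Z.
Proof. unfold inA; lia. Qed.

Lemma Zmod3_shift u v : (u mod 3 = v mod 3)%Z -> u = (v + 3 * ((u - v) / 3))%Z.
Proof. intros H; Z.div_mod_to_equations; lia. Qed.

(* Three of nine points of [A2] agree modulo 3, say [T p], [T p + 3 e] and [T p + 3 e'];
   [inA_shift] picks one of the points [T p + b e + c e'] inside their triangle. *)
Lemma A2_interior_point T : (forall k, (k < 9)%nat -> A2 (T k)) ->
  (forall i, (i < 9)%nat -> extreme 9 T i) ->
  exists y, A2 y /\ hull 9 T y /\ forall i, (i < 9)%nat -> y <> T i.
Proof.
  intros HT Hext.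
  destruct (A2_coords 9 T HT) as (a & b & Hab).
  destruct (pigeonhole_three (fun k => Z.to_nat (2 * (a k mod 3) + b k mod 3)) 4 (seq 0 9))
    as (p & q & r & Hp & Hq & Hr & Hpq & Hpr & Hqr & Cq & Cr).
  { apply seq_NoDup. }
  { intros k Hk%in_seq; destruct (Hab k ltac:(lia)) as (_ & Ha & Hb); unfold inA in *; lia. }
  { rewrite length_seq; lia. }
  apply in_seq in Hp, Hq, Hr.
  destruct (Hab p ltac:(lia)) as (Tp & Ap & Bp), (Hab q ltac:(lia)) as (Tq & Aq & Bq),
    (Hab r ltac:(lia)) as (Tr & Ar & Br).
  destruct (inA_class_eq _ _ _ _ Aq Bq Ap Bp (eq_sym Cq)) as [Eq Fq].
  destruct (inA_class_eq _ _ _ _ Ar Br Ap Bp (eq_sym Cr)) as [Er Fr].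
  apply Zmod3_shift in Eq, Fq, Er, Fr.
  set (e1 := ((a q - a p) / 3)%Z) in *; set (e2 := ((a r - a p) / 3)%Z) in *;
  set (f1 := ((b q - b p) / 3)%Z) in *; set (f2 := ((b r - b p) / 3)%Z) in *.
  destruct (inA_shift (a p) (b p) e1 e2 f1 f2 Ap Bp) as (s & t & Hst & Ha & Hb).
  assert (Hc : 0 <= IZR s <= 2 /\ 0 <= IZR t <= 2 /\ 1 <= IZR s + IZR t <= 3)
    by (rewrite <- plus_IZR; repeat split; apply IZR_le; lia).
  set (w := fun k => (3 - IZR s - IZR t) / 3 * delta p k + IZR s / 3 * delta q k
                     + IZR t / 3 * delta r k).
  assert (Hw : weights 9 (fun _ => False) w).
  { repeat split; [|contradiction|].
    - intros k; unfold w, delta; destruct (Nat.eqb k p), (Nat.eqb k q), (Nat.eqb k r); lra.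
    - rewrite (rsum_ext 9 _ (fun k => w k * 1)) by (intros; ring).
      unfold w; rewrite rsum_three_deltas by lia; field. }
  exists (IZR (a p + s * e1 + t * e2), IZR (b p + s * f1 + t * f2)).
  assert (Hy : (IZR (a p + s * e1 + t * e2), IZR (b p + s * f1 + t * f2)) = combo 9 w T).
  { unfold combo, w; rewrite !rsum_three_deltas, Tp, Tq, Tr by lia; cbn [fst snd].
    rewrite Eq, Er, Fq, Fr; f_equal; rewrite !plus_IZR, !mult_IZR; field. }
  split; [|split].
  - exists (a p + s * e1 + t * e2)%Z, (b p + s * f1 + t * f2)%Z; auto.
  - exists w; auto.
  - intros i Hi Hyi; destruct Hw as (Hw0 & _ & Hw1).
    assert (Hwi : w i = 1) by (apply (extreme_weight_one 9 T i w); auto; congruence).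
    unfold w, delta in Hwi.
    destruct (Nat.eqb_spec i p), (Nat.eqb_spec i q), (Nat.eqb_spec i r); subst; try lia; lra.
Qed.

(* An octagon with vertices in [A2]: [octagon_halfplane i] is bounded by the line through the
   two neighbours of vertex [i], on the side away from it. *)
Definition octagon_vertex_Z (k : nat) : Z * Z :=
  match k with
  | 0 => (0, 0)%Z | 1 => (1, 0)%Z | 2 => (3, 1)%Z | 3 => (6, 3)%Z
  | 4 => (7, 4)%Z | 5 => (6, 4)%Z | 6 => (4, 3)%Z | _ => (1, 1)%Z
  end.

Definition octagon_line (i : nat) : Z * Z * Z :=
  match i with
  | 0 => (1, 0, -1)%Z | 1 => (-1, 3, 0)%Z | 2 => (-3, 5, 3)%Z | 3 => (-3, 4, 5)%Z
  | 4 => (-1, 0, 6)%Z | 5 => (1, -3, 5)%Z | 6 => (3, -5, 2)%Z | _ => (3, -4, 0)%Z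
  end.

Definition octagon_vertex (k : nat) : point :=
  (IZR (fst (octagon_vertex_Z k)), IZR (snd (octagon_vertex_Z k))).

Definition octagon_halfplane (i : nat) (p : point) : Prop :=
  let '(c0, c1, c2) := octagon_line i in 0 <= IZR c0 * fst p + IZR c1 * snd p + IZR c2.

Lemma octagon_halfplane_Z i x y : octagon_halfplane i (IZR x, IZR y) <->
  (0 <= let '(c0, c1, c2) := octagon_line i in c0 * x + c1 * y + c2)%Z.
Proof.
  unfold octagon_halfplane; destruct (octagon_line i) as [[c0 c1] c2]; cbn [fst snd].
  rewrite <- !mult_IZR, <- !plus_IZR; split; [apply le_IZR | apply IZR_le].
Qed.

Lemma octagon_halfplane_convex i : convex (octagon_halfplane i).
Proof.
  unfold convex, octagon_halfplane; destruct (octagon_line i) as [[c0 c1] c2].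
  intros p q Hp Hq t Ht; cbn [fst snd].
  assert (0 <= (1 - t) * (IZR c0 * fst p + IZR c1 * snd p + IZR c2)) by (apply Rmult_le_pos; lra).
  assert (0 <= t * (IZR c0 * fst q + IZR c1 * snd q + IZR c2)) by (apply Rmult_le_pos; lra).
  nra.
Qed.

Lemma octagon_vertex_A2 k : A2 (octagon_vertex k).
Proof.
  exists (fst (octagon_vertex_Z k)), (snd (octagon_vertex_Z k)); repeat split; unfold inA;
    destruct k as [|[|[|[|[|[|[|[|k]]]]]]]]; simpl; auto.
Qed.

Lemma octagon_halfplane_vertex i k : (i < 8)%nat -> (k < 8)%nat ->
  (octagon_halfplane i (octagon_vertex k) <-> i <> k).
Proof.
  intros Hi Hk; unfold octagon_vertex; rewrite octagon_halfplane_Z.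
  destruct i as [|[|[|[|[|[|[|[|i]]]]]]]]; try lia;
    destruct k as [|[|[|[|[|[|[|[|k]]]]]]]]; try lia; simpl; split; intros; lia || congruence.
Qed.

Lemma octagon_A2_free p : A2 p -> exists i, (i < 8)%nat /\ ~ octagon_halfplane i p.
Proof.
  intros (x & y & Ex & Ey & Hx & Hy); destruct p as [p1 p2]; cbn [fst snd] in Ex, Ey; subst.
  apply NNPP; intros Hall.
  assert (H : forall i, (i < 8)%nat ->
            (0 <= let '(c0, c1, c2) := octagon_line i in c0 * x + c1 * y + c2)%Z).
  { intros i Hi; apply octagon_halfplane_Z, NNPP; eauto. }
  pose proof (H 0%nat ltac:(lia)); pose proof (H 1%nat ltac:(lia)); pose proof (H 2%nat ltac:(lia));
  pose proof (H 3%nat ltac:(lia)); pose proof (H 4%nat ltac:(lia)); pose proof (H 5%nat ltac:(lia));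
  pose proof (H 6%nat ltac:(lia)); pose proof (H 7%nat ltac:(lia)); cbv [octagon_line] in *.
  unfold inA in *; Z.div_mod_to_equations; lia.
Qed.

Theorem proposition10 : is_helly_number A2 8.
Proof.
  split.
  - apply helly_prop_of_subhull_points; intros T HT.
    exact (subhull_point_exists A2 9 A2_integral A2_interior_point T HT).
  - intros h Hh.
    apply (helly_prop_lower_bound A2 h 8 octagon_halfplane octagon_vertex); auto using
      octagon_halfplane_convex, octagon_vertex_A2, octagon_halfplane_vertex, octagon_A2_free.
Qed.
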